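(* Let $h_N(\rho)=\tfrac12\big[(\mathrm{tr}\,\rho^{1/2})^2-1\big]$ for density matrices $\rho$ on a finite-dimensional Hilbert space; this is the reduced function of the negativity, i.e. $N(|\psi\rangle)=h_N(\mathrm{tr}_B|\psi\rangle\langle\psi|)=\sum_{i<j}\lambda_i\lambda_j$ for a pure state with Schmidt coefficients $\lambda_i$. Then $h_N$ is strictly concave: for all density matrices $\rho_1\neq\rho_2$ and $0<p<1$, $h_N(p\rho_1+(1-p)\rho_2)>p\,h_N(\rho_1)+(1-p)\,h_N(\rho_2)$.
   Context: The negativity of a bipartite state $\rho$ is $N(\rho)=\sum_i\mu_i$, where $\mu_i$ are the absolute values of the negative eigenvalues of the partial transpose $\rho^{T_A}$. *)

From HB Require Import structures.
From mathcomp Require Import all_boot all_order all_algebra.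
From mathcomp Require Import sesquilinear spectral.
Set Implicit Arguments. Unset Strict Implicit. Unset Printing Implicit Defensive.
Import Order.TTheory GRing.Theory Num.Theory.
Local Open Scope ring_scope.
Local Open Scope sesquilinear_scope.

Definition psdmx {C : numClosedFieldType} {n : nat} (A : 'M[C]_n) : Prop :=
  A \is hermsymmx /\ forall v : 'rV[C]_n, 0 <= (v *m A *m v ^t*) 0 0.

Definition density {C : numClosedFieldType} {n : nat} (rho : 'M[C]_n) : Prop :=
  psdmx rho /\ \tr rho = 1.

Definition sqrtmx {C : numClosedFieldType} {n : nat} (A : 'M[C]_n) : 'M[C]_n :=
  invmx (spectralmx A) *m diag_mx (map_mx (fun x : C => sqrtC x) (spectral_diag A))
    *m spectralmx A.

Definition hN {C : numClosedFieldType} {n : nat} (rho : 'M[C]_n) : C :=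
  ((\tr (sqrtmx rho)) ^+ 2 - 1) / 2.

From HB Require Import structures.
From mathcomp Require Import all_boot all_order all_algebra.
From mathcomp Require Import sesquilinear spectral ring.
Import Order.TTheory GRing.Theory Num.Theory.
Local Open Scope ring_scope.
Local Open Scope sesquilinear_scope.
Set Implicit Arguments.
Unset Strict Implicit.
Unset Printing Implicit Defensive.

(* Work in an orthonormal eigenbasis of sigma = p rho1 + (1 - p) rho2 and let
   t_i be the square roots of the eigenvalues of sigma, so that
   tr sigma^(1/2) = sum_i t_i.  For hermitian B, Cauchy-Schwarz gives
   (tr B)^2 <= (sum_i t_i) (sum_i (B^2)_ii / t_i).  Taking B = rho_k^(1/2) and
   averaging with weights p, 1 - p, the right-hand sides add up to
   (sum_i t_i)^2 because the diagonal of sigma is t_i^2: this is concavity.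
   Equality forces each rho_k^(1/2) to be diagonal in that basis and
   proportional to sigma^(1/2), hence rho1 = sigma = rho2. *)

Section UnitaryConjugation.
Variables (C : numClosedFieldType) (n : nat).
Implicit Types (V A B : 'M[C]_n).

Definition uconjmx V A := V *m A *m V ^t*.

Lemma unitarymx_tV V : V \is unitarymx -> V ^t* *m V = 1%:M.
Proof. by move=> V_unitary; rewrite -[V ^t*]mul1mx mulmxKtV. Qed.

Lemma uconjmx_inj V : V \is unitarymx -> injective (uconjmx V).
Proof.
move=> V_unitary; apply: (can_inj (g := fun A => V ^t* *m A *m V)) => A.
by rewrite /uconjmx !mulmxA unitarymx_tV // mul1mx mulmxKtV.
Qed.

Lemma mxtrace_uconjmx V A : V \is unitarymx -> \tr (uconjmx V A) = \tr A.
Proof. by move=> V_unitary; rewrite mxtrace_mulC mulmxA unitarymx_tV // mul1mx. Qed.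

Lemma uconjmxD V A B : uconjmx V (A + B) = uconjmx V A + uconjmx V B.
Proof. by rewrite /uconjmx mulmxDr mulmxDl. Qed.

Lemma uconjmxZ V a A : uconjmx V (a *: A) = a *: uconjmx V A.
Proof. by rewrite /uconjmx -scalemxAr -scalemxAl. Qed.

Lemma uconjmxM V A B :
  V \is unitarymx -> uconjmx V A *m uconjmx V B = uconjmx V (A *m B).
Proof. by move=> V_unitary; rewrite /uconjmx !mulmxA mulmxKtV. Qed.

Lemma trmxC_mul m p (A : 'M[C]_(m, n)) (B : 'M[C]_(n, p)) :
  (A *m B) ^t* = B ^t* *m A ^t*.
Proof. by rewrite trmx_mul map_mxM. Qed.

Lemma trmxC_uconjmx V A : A ^t* = A -> (uconjmx V A) ^t* = uconjmx V A.
Proof. by move=> hA; rewrite /uconjmx !trmxC_mul trmxCK hA mulmxA. Qed.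

Lemma hermsymmxE A : (A \is hermsymmx) = (A ^t* == A).
Proof. by rewrite qualifE expr0 scale1r eq_sym. Qed.

Lemma uconjmx_diag_ge0 V A i : psdmx A -> 0 <= uconjmx V A i i.
Proof.
move=> [_ A_psd]; rewrite (_ : uconjmx V A i i = (row i V *m A *m (row i V) ^t*) 0 0).
  exact: A_psd.
rewrite !mxE; apply: eq_bigr => k _; rewrite !mxE.
by congr (_ * _); apply: eq_bigr => j _; rewrite mxE.
Qed.

Lemma uconjmx_spectral A :
  A \is hermsymmx -> uconjmx (spectralmx A) A = diag_mx (spectral_diag A).
Proof.
move=> /hermitian_normalmx /orthomx_spectralP A_spectral.
have V_unitary := spectral_unitarymx A.
rewrite /uconjmx {2}A_spectral invmx_unitary //.
by rewrite !mulmxA mulmxtVK // (unitarymxP V_unitary) mul1mx.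
Qed.

End UnitaryConjugation.

Section PositiveSemidefinite.
Variables (C : numClosedFieldType) (n : nat).
Implicit Types (A B : 'M[C]_n).

Lemma psdmxD A B : psdmx A -> psdmx B -> psdmx (A + B).
Proof.
move=> [hA A_psd] [hB B_psd]; split.
  move: hA hB; rewrite !hermsymmxE => /eqP hA /eqP hB.
  by rewrite linearD /= map_mxD hA hB.
by move=> v; rewrite mulmxDr mulmxDl mxE addr_ge0.
Qed.

Lemma psdmxZ a A : 0 <= a -> psdmx A -> psdmx (a *: A).
Proof.
move=> a_ge0 [hA A_psd]; split.
  move: hA; rewrite !hermsymmxE => /eqP hA.
  by rewrite linearZ /= map_mxZ hA /= conj_Creal ?ger0_real.
by move=> v; rewrite -scalemxAr -scalemxAl mxE mulr_ge0.
Qed.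

Lemma density_convex A B p :
  density A -> density B -> 0 <= p <= 1 -> density (p *: A + (1 - p) *: B).
Proof.
move=> [A_psd trA] [B_psd trB] /andP[p_ge0 p_le1]; split.
  by apply: psdmxD; apply: psdmxZ; rewrite ?subr_ge0.
by rewrite mxtraceD !mxtraceZ trA trB !mulr1 addrC subrK.
Qed.

Definition sqrt_spectrum A (i : 'I_n) := sqrtC (spectral_diag A 0 i).

Lemma spectral_diag_ge0 A i : psdmx A -> 0 <= spectral_diag A 0 i.
Proof.
move=> A_psd; have := uconjmx_diag_ge0 (spectralmx A) i A_psd.
by rewrite uconjmx_spectral ?A_psd.1 // mxE eqxx mulr1n.
Qed.

Lemma sqrt_spectrum_ge0 A i : psdmx A -> 0 <= sqrt_spectrum A i.
Proof. by move=> A_psd; rewrite sqrtC_ge0 spectral_diag_ge0. Qed.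

Lemma sqrtmxE A : sqrtmx A =
  (spectralmx A) ^t* *m diag_mx (\row_i sqrt_spectrum A i) *m spectralmx A.
Proof.
rewrite /sqrtmx invmx_unitary ?spectral_unitarymx //; congr (_ *m diag_mx _ *m _).
by apply/rowP => i; rewrite !mxE.
Qed.

Lemma trmxC_sqrtmx A : psdmx A -> (sqrtmx A) ^t* = sqrtmx A.
Proof.
move=> A_psd; rewrite sqrtmxE !trmxC_mul trmxCK mulmxA; congr (_ *m _ *m _).
rewrite tr_diag_mx map_diag_mx; congr diag_mx; apply/rowP => i.
by rewrite !mxE /= conj_Creal // ger0_real // sqrt_spectrum_ge0.
Qed.

Lemma mulmx_sqrtmx A : A \is hermsymmx -> sqrtmx A *m sqrtmx A = A.
Proof.
move=> hA; have V_unitary := spectral_unitarymx A.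
have /hermitian_normalmx /orthomx_spectralP A_spectral := hA.
rewrite sqrtmxE !mulmxA mulmxtVK // -[_ *m _ *m diag_mx _]mulmxA mulmx_diag.
rewrite [RHS]A_spectral invmx_unitary //; congr (_ *m diag_mx _ *m _).
by apply/rowP => i; rewrite !mxE -expr2 sqrtCK.
Qed.

Lemma mxtrace_sqrtmx A : \tr (sqrtmx A) = \sum_i sqrt_spectrum A i.
Proof.
rewrite sqrtmxE mxtrace_mulC mulmxA (unitarymxP (spectral_unitarymx A)) mul1mx.
by rewrite mxtrace_diag; apply: eq_bigr => i _; rewrite mxE.
Qed.

End PositiveSemidefinite.

(* The terms with [t i = 0] vanish on both sides, as [x / 0 = 0]. *)
Lemma weighted_sqr_sum_gap (F : fieldType) (I : finType) (b t : I -> F) :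
  \sum_i t i != 0 -> (forall i, t i = 0 -> b i = 0) ->
  (\sum_i t i) * (\sum_i b i ^+ 2 / t i) - (\sum_i b i) ^+ 2 =
  (\sum_i t i) * \sum_i (b i - (\sum_j b j) / (\sum_j t j) * t i) ^+ 2 / t i.
Proof.
set tau := \sum_i t i; set c := _ / tau => tau_neq0 tb0.
have termE i : (b i - c * t i) ^+ 2 / t i = b i ^+ 2 / t i - 2 * c * b i + c ^+ 2 * t i.
  have [ti0|ti_neq0] := eqVneq (t i) 0; first by rewrite ti0 tb0 // invr0; ring.
  by field.
rewrite (eq_bigr _ (fun i _ => termE i)) !big_split /= sumrN -!mulr_sumr -/tau /c.
by field.
Qed.

Section HermitianSquare.
Variables (C : numClosedFieldType) (n : nat).
Implicit Types (B : 'M[C]_n) (t : 'I_n -> C).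

Lemma hermitian_entryC B i j : B ^t* = B -> (B j i)^* = B i j.
Proof. by move=> hB; rewrite -{2}hB !mxE. Qed.

Lemma hermitian_diag_real B i : B ^t* = B -> B i i \is Num.real.
Proof. by move=> hB; apply/CrealP; rewrite hermitian_entryC. Qed.

Lemma hermitian_sqr_diag B i :
  B ^t* = B -> (B *m B) i i = \sum_k `|B i k| ^+ 2.
Proof.
by move=> hB; rewrite mxE; apply: eq_bigr => k _; rewrite normCK hermitian_entryC.
Qed.

Lemma hermitian_sqr_diag_eq0 B i :
  B ^t* = B -> (B *m B) i i = 0 -> forall k, B i k = 0.
Proof.
move=> hB; rewrite hermitian_sqr_diag // => /psumr_eq0P sum0 k.
have /eqP := sum0 (fun k _ => exprn_ge0 2 (normr_ge0 (B i k))) k isT.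
by rewrite expf_eq0 normr_eq0 => /eqP.
Qed.

Lemma hermitian_sqr_diag_split B i :
  B ^t* = B -> (B *m B) i i = B i i ^+ 2 + \sum_(k | k != i) `|B i k| ^+ 2.
Proof.
move=> hB; rewrite hermitian_sqr_diag // (bigD1 i) //=.
by rewrite real_normK ?hermitian_diag_real.
Qed.

Lemma hermitian_trace_sqr_gap B t :
  B ^t* = B -> \sum_i t i != 0 -> (forall i, t i = 0 -> (B *m B) i i = 0) ->
  (\sum_i t i) * (\sum_i (B *m B) i i / t i) - (\tr B) ^+ 2 =
  (\sum_i t i) * \sum_i ((B i i - \tr B / (\sum_j t j) * t i) ^+ 2 / t i
                        + (\sum_(k | k != i) `|B i k| ^+ 2) / t i).
Proof.
move=> hB tau_neq0 tBB0.
have tB0 i : t i = 0 -> B i i = 0 by move/tBB0/hermitian_sqr_diag_eq0; apply.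
have splitE : \sum_i (B *m B) i i / t i =
    \sum_i B i i ^+ 2 / t i + \sum_i (\sum_(k | k != i) `|B i k| ^+ 2) / t i.
  by rewrite -big_split; apply: eq_bigr => i _; rewrite hermitian_sqr_diag_split // mulrDl.
rewrite splitE big_split /= !mulrDr -weighted_sqr_sum_gap //.
by rewrite /mxtrace; ring.
Qed.

Section TraceBound.
Variables (B : 'M[C]_n) (t : 'I_n -> C).
Hypotheses (hB : B ^t* = B) (t_ge0 : forall i, 0 <= t i) (tau_gt0 : 0 < \sum_i t i)
  (tBB0 : forall i, t i = 0 -> (B *m B) i i = 0).

Let c := \tr B / \sum_j t j.
Let diag_defect i := (B i i - c * t i) ^+ 2 / t i.
Let offdiag_mass i := (\sum_(k | k != i) `|B i k| ^+ 2) / t i.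

Let gapE : (\sum_i t i) * (\sum_i (B *m B) i i / t i) - (\tr B) ^+ 2 =
  (\sum_i t i) * \sum_i (diag_defect i + offdiag_mass i).
Proof. by rewrite hermitian_trace_sqr_gap // gt_eqF. Qed.

Let diag_defect_ge0 i : 0 <= diag_defect i.
Proof.
have c_real : c \is Num.real.
  rewrite rpredM ?rpredV ?(ger0_real (ltW tau_gt0)) //.
  by apply: rpred_sum => j _; apply: hermitian_diag_real.
have diff_real : B i i - c * t i \is Num.real.
  by rewrite rpredB ?hermitian_diag_real // rpredM // ger0_real.
by rewrite /diag_defect divr_ge0 ?real_exprn_even_ge0.
Qed.

Let offdiag_mass_ge0 i : 0 <= offdiag_mass i.
Proof. by apply: divr_ge0 (t_ge0 i); apply: sumr_ge0 => k _; apply: exprn_ge0. Qed.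

Lemma hermitian_trace_sqr_le :
  (\tr B) ^+ 2 <= (\sum_i t i) * \sum_i (B *m B) i i / t i.
Proof.
rewrite -subr_ge0 gapE; apply: mulr_ge0 (ltW tau_gt0) _.
by apply: sumr_ge0 => i _; apply: addr_ge0.
Qed.

Lemma hermitian_trace_sqr_eq :
  (\tr B) ^+ 2 = (\sum_i t i) * (\sum_i (B *m B) i i / t i) ->
  B = diag_mx (\row_i (c * t i)).
Proof.
move=> /esym/eqP; rewrite -subr_eq0 gapE mulf_eq0 gt_eqF //= => /eqP.
move=> /psumr_eq0P term0; apply/matrixP => i j; rewrite !mxE.
have [ti0|ti_neq0] := eqVneq (t i) 0.
  by rewrite ti0 mulr0 mul0rn; apply: hermitian_sqr_diag_eq0; rewrite ?tBB0.
have /eqP := term0 (fun i _ => addr_ge0 (diag_defect_ge0 i) (offdiag_mass_ge0 i)) i isT.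
rewrite paddr_eq0 // /diag_defect /offdiag_mass !mulf_eq0 invr_eq0 (negbTE ti_neq0).
rewrite !orbF orbb subr_eq0 => /andP[/eqP Bii /eqP off0].
have [<-|nij] := eqVneq i j; first by rewrite Bii mulr1n.
have := psumr_eq0P (fun k _ => exprn_ge0 2 (normr_ge0 (B i k))) off0 (i := j).
by rewrite eq_sym nij mulr0n => /(_ isT)/eqP; rewrite expf_eq0 normr_eq0 => /eqP.
Qed.

End TraceBound.

End HermitianSquare.

Section SqrtTraceBound.
Variables (C : numClosedFieldType) (n : nat) (rho V : 'M[C]_n) (t : 'I_n -> C).
Hypotheses (rho_psd : psdmx rho) (V_unitary : V \is unitarymx)
  (t_ge0 : forall i, 0 <= t i) (tau_gt0 : 0 < \sum_i t i)
  (t_eq0 : forall i, t i = 0 -> uconjmx V rho i i = 0).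

Let B := uconjmx V (sqrtmx rho).

Let hB : B ^t* = B.
Proof. exact/trmxC_uconjmx/trmxC_sqrtmx. Qed.

Let sqrB : B *m B = uconjmx V rho.
Proof. by rewrite uconjmxM // mulmx_sqrtmx // rho_psd.1. Qed.

Let trB : \tr B = \tr (sqrtmx rho).
Proof. exact: mxtrace_uconjmx. Qed.

Let tBB0 i : t i = 0 -> (B *m B) i i = 0.
Proof. by rewrite sqrB; apply: t_eq0. Qed.

Lemma sqrtmx_trace_sqr_le :
  (\tr (sqrtmx rho)) ^+ 2 <= (\sum_i t i) * \sum_i uconjmx V rho i i / t i.
Proof. by rewrite -trB -sqrB; apply: hermitian_trace_sqr_le. Qed.

Lemma sqrtmx_trace_sqr_eq :
  (\tr (sqrtmx rho)) ^+ 2 = (\sum_i t i) * (\sum_i uconjmx V rho i i / t i) ->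
  uconjmx V rho = (\tr (sqrtmx rho) / \sum_i t i) ^+ 2 *: diag_mx (\row_i t i ^+ 2).
Proof.
rewrite -trB -sqrB => /hermitian_trace_sqr_eq BE.
rewrite [in LHS]BE // mulmx_diag; apply/matrixP => i j; rewrite !mxE.
by case: (i == j); rewrite ?mulr0n ?mulr1n ?mulr0 //; ring.
Qed.

End SqrtTraceBound.

Section Mixture.
Variables (C : numClosedFieldType) (n : nat) (rho1 rho2 : 'M[C]_n) (p : C).
Hypotheses (rho1_density : density rho1) (rho2_density : density rho2)
  (p_gt0 : 0 < p) (p_lt1 : p < 1).

Local Notation sigma := (p *: rho1 + (1 - p) *: rho2).
Local Notation V := (spectralmx sigma).
Local Notation t := (sqrt_spectrum sigma).
Local Notation gap rho :=
  ((\sum_i t i) * (\sum_i uconjmx V rho i i / t i) - (\tr (sqrtmx rho)) ^+ 2).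

Let q_gt0 : 0 < 1 - p. Proof. by rewrite subr_gt0. Qed.

Let sigma_density : density sigma.
Proof. by apply: density_convex; rewrite ?ltW. Qed.

Let V_unitary : V \is unitarymx. Proof. exact: spectral_unitarymx. Qed.

Let t_ge0 i : 0 <= t i. Proof. exact/sqrt_spectrum_ge0/sigma_density.1. Qed.

Let uconjmx_sigma : uconjmx V sigma = diag_mx (\row_i t i ^+ 2).
Proof.
rewrite uconjmx_spectral ?sigma_density.1.1 //; congr diag_mx.
by apply/rowP => i; rewrite !mxE sqrtCK.
Qed.

Let t_sqr i : t i ^+ 2 = p * uconjmx V rho1 i i + (1 - p) * uconjmx V rho2 i i.
Proof.
have := congr1 (fun M : 'M[C]_n => M i i) uconjmx_sigma.
by rewrite /= uconjmxD !uconjmxZ !mxE eqxx mulr1n => <-.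
Qed.

Let sum_t_sqr : \sum_i t i ^+ 2 = 1.
Proof.
rewrite -[RHS]sigma_density.2 -(mxtrace_uconjmx sigma V_unitary) uconjmx_sigma.
by rewrite mxtrace_diag; apply: eq_bigr => i _; rewrite mxE.
Qed.

Let sum_t_gt0 : 0 < \sum_i t i.
Proof.
rewrite lt_def (sumr_ge0 _ (fun i _ => t_ge0 i)) andbT; apply/eqP => sum_t0.
have t0 := psumr_eq0P (fun i _ => t_ge0 i) sum_t0.
have := sum_t_sqr; rewrite big1 => [/esym/eqP|i _]; first by rewrite oner_eq0.
by rewrite t0 // expr0n.
Qed.

Let t_eq0 i : t i = 0 -> uconjmx V rho1 i i = 0 /\ uconjmx V rho2 i i = 0.
Proof.
move=> ti0; have /eqP := t_sqr i; rewrite ti0 expr0n eq_sym /=.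
have p1_ge0 := mulr_ge0 (ltW p_gt0) (uconjmx_diag_ge0 V i rho1_density.1).
have q2_ge0 := mulr_ge0 (ltW q_gt0) (uconjmx_diag_ge0 V i rho2_density.1).
by rewrite paddr_eq0 // !mulf_eq0 (gt_eqF p_gt0) (gt_eqF q_gt0) => /andP[/eqP -> /eqP ->].
Qed.

Let sum_t_mix : \sum_i t i =
  p * (\sum_i uconjmx V rho1 i i / t i) + (1 - p) * \sum_i uconjmx V rho2 i i / t i.
Proof.
rewrite !mulr_sumr -big_split; apply: eq_bigr => i _ /=.
have [ti0|ti_neq0] := eqVneq (t i) 0; first by rewrite ti0 invr0 !mulr0 addr0.
by rewrite !mulrA -mulrDl -t_sqr expr2 mulfK.
Qed.

Let gap_eq0 rho : density rho -> (forall i, t i = 0 -> uconjmx V rho i i = 0) ->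
  gap rho = 0 -> rho = sigma.
Proof.
move=> [rho_psd tr_rho] t_rho0 /eqP; rewrite subr_eq0 eq_sym => /eqP.
move=> /(sqrtmx_trace_sqr_eq rho_psd V_unitary t_ge0 sum_t_gt0 t_rho0).
rewrite -uconjmx_sigma => rhoE; apply: (uconjmx_inj V_unitary); rewrite rhoE.
suff -> : (\tr (sqrtmx rho) / \sum_i t i) ^+ 2 = 1 by rewrite scale1r.
have := congr1 mxtrace rhoE.
by rewrite mxtraceZ !mxtrace_uconjmx // tr_rho sigma_density.2 mulr1.
Qed.

Lemma hN_mix_gap : hN sigma - (p * hN rho1 + (1 - p) * hN rho2) =
  (p * gap rho1 + (1 - p) * gap rho2) / 2.
Proof. by rewrite /hN mxtrace_sqrtmx expr2 {1}sum_t_mix; ring. Qed.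

Lemma mix_gap_gt0 : rho1 != rho2 -> 0 < p * gap rho1 + (1 - p) * gap rho2.
Proof.
move=> rho12.
have t10 i : t i = 0 -> uconjmx V rho1 i i = 0 by move=> /t_eq0[].
have t20 i : t i = 0 -> uconjmx V rho2 i i = 0 by move=> /t_eq0[].
have := sqrtmx_trace_sqr_le rho1_density.1 V_unitary t_ge0 sum_t_gt0 t10.
have := sqrtmx_trace_sqr_le rho2_density.1 V_unitary t_ge0 sum_t_gt0 t20.
rewrite -subr_ge0 => /(mulr_ge0 (ltW q_gt0)) g2.
rewrite -subr_ge0 => /(mulr_ge0 (ltW p_gt0)) g1.
rewrite lt_def (addr_ge0 g1 g2) andbT paddr_eq0 // !mulf_eq0.
rewrite (gt_eqF p_gt0) (gt_eqF q_gt0) /=; apply: contraNN rho12.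
move=> /andP[/eqP g10 /eqP g20]; apply/eqP.
by rewrite (gap_eq0 rho1_density t10 g10) -(gap_eq0 rho2_density t20 g20).
Qed.

End Mixture.

Theorem mainTheorem3 (C : numClosedFieldType) (n : nat)
  (rho1 rho2 : 'M[C]_n) (p : C) :
  density rho1 -> density rho2 -> rho1 != rho2 ->
  0 < p -> p < 1 ->
  p * hN rho1 + (1 - p) * hN rho2 < hN (p *: rho1 + (1 - p) *: rho2).
Proof.
move=> rho1_density rho2_density rho12 p_gt0 p_lt1.
rewrite -subr_gt0 hN_mix_gap //.
by apply: divr_gt0; [exact: mix_gap_gt0 | rewrite ltr0n].
Qed.
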